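(* Let $k$ be a commutative ring, $M$ a commutative $k$-algebra and $H$ a cocommutative $k$-coalgebra with coproduct $\Delta$ and counit $\eta$. Then there is a universal commutative $k$-algebra $H(M)$ equipped with a linear map $H\otimes M\to H(M)$, $h\otimes m\mapsto h(m)$, satisfying $$h(mn)=\sum h'(m)h''(n),\qquad h(1)=\eta(h)$$ (universal meaning: for any commutative $k$-algebra $B$ with a linear map $H\otimes M\to B$ satisfying these identities there is a unique algebra homomorphism $H(M)\to B$ compatible with the maps from $H\otimes M$). If $H$ is a bialgebra, then $H$ acts on the commutative ring $H(M)$ (with $h_1(h_2(m))=(h_1h_2)(m)$). If $M$ is a commutative and cocommutative bialgebra (respectively Hopf algebra), then so is $H(M)$.
   Context: Sweedler notation $\Delta(h)=\sum h'\otimes h''$. *)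

(* Tensor products are not in the library: elements of U (x) V
   are represented by finite lists of pure tensors (scalars absorbed into the
   first factor), and equality in U (x) V is the equality of their images
   under every bilinear map (the universal property of the tensor product). *)
From HB Require Import structures.
From mathcomp Require Import all_boot all_order all_algebra.
Set Implicit Arguments. Unset Strict Implicit. Unset Printing Implicit Defensive.
Import Order.TTheory GRing.Theory Num.Theory.
Local Open Scope ring_scope.

Section Defs.
Variable k : comPzRingType.

Definition linmap (U V : lmodType k) (f : U -> V) : Prop :=
  forall (a : k) (u u' : U), f (a *: u + u') = a *: f u + f u'.

Definition linform (U : lmodType k) (f : U -> k) : Prop :=
  forall (a : k) (u u' : U), f (a *: u + u') = a * f u + f u'.

Definition bilin (U V W : lmodType k) (b : U -> V -> W) : Prop :=
  (forall v, linmap (fun u => b u v)) /\ (forall u, linmap (b u)).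

Definition trilin (U V X W : lmodType k) (t : U -> V -> X -> W) : Prop :=
  (forall v x, linmap (fun u => t u v x)) /\
  (forall u x, linmap (fun v => t u v x)) /\
  (forall u v, linmap (t u v)).

Definition tens2 (U V : lmodType k) := seq (U * V).
Definition tens3 (U V X : lmodType k) := seq (U * V * X).

Definition teq2 (U V : lmodType k) (x y : tens2 U V) : Prop :=
  forall (W : lmodType k) (b : U -> V -> W), bilin b ->
    \sum_(p <- x) b p.1 p.2 = \sum_(p <- y) b p.1 p.2.

Definition teq3 (U V X : lmodType k) (x y : tens3 U V X) : Prop :=
  forall (W : lmodType k) (t : U -> V -> X -> W), trilin t ->
    \sum_(p <- x) t p.1.1 p.1.2 p.2 = \sum_(p <- y) t p.1.1 p.1.2 p.2.

(* (C, Delta, eps) is a k-coalgebra; Delta c is a representative of the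
   coproduct of c, i.e. Delta c = sum c' (x) c''. *)
Definition is_coalgebra (C : lmodType k) (Delta : C -> tens2 C C)
    (eps : C -> k) : Prop :=
  [/\ linform eps,
      (forall (a : k) (c d : C),
          teq2 (Delta (a *: c + d))
               ([seq (a *: p.1, p.2) | p <- Delta c] ++ Delta d)),
      (forall c : C,
          teq3 (flatten [seq [seq (q.1, q.2, p.2) | q <- Delta p.1]
                        | p <- Delta c])
               (flatten [seq [seq (p.1, q.1, q.2) | q <- Delta p.2]
                        | p <- Delta c])),
      (forall c : C, \sum_(p <- Delta c) eps p.1 *: p.2 = c) &
      (forall c : C, \sum_(p <- Delta c) eps p.2 *: p.1 = c)].

Definition cocommutative (C : lmodType k) (Delta : C -> tens2 C C) : Prop :=
  forall c : C, teq2 [seq (p.2, p.1) | p <- Delta c] (Delta c).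

Definition is_algebra_str (A : lmodType k) (mul : A -> A -> A) (one : A)
    : Prop :=
  [/\ bilin mul, associative mul, left_id one mul & right_id one mul].

Definition bialg_compat (A : lmodType k) (Delta : A -> tens2 A A)
    (eps : A -> k) (mul : A -> A -> A) (one : A) : Prop :=
  [/\ (forall x y : A, teq2 (Delta (mul x y))
          [seq (mul p.1 q.1, mul p.2 q.2) | p <- Delta x, q <- Delta y]),
      teq2 (Delta one) [:: (one, one)],
      (forall x y : A, eps (mul x y) = eps x * eps y) &
      eps one = 1].

Definition is_bialgebra (H : lmodType k) (mul : H -> H -> H) (one : H)
    (Delta : H -> tens2 H H) (eps : H -> k) : Prop :=
  [/\ is_algebra_str mul one, is_coalgebra Delta eps &
      bialg_compat Delta eps mul one].

Definition is_bialgebra_on (A : algType k) (Delta : A -> tens2 A A)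
    (eps : A -> k) : Prop :=
  is_coalgebra Delta eps /\ bialg_compat Delta eps *%R 1.

Definition is_antipode (A : algType k) (Delta : A -> tens2 A A)
    (eps : A -> k) (S : A -> A) : Prop :=
  [/\ linmap S,
      (forall a : A, \sum_(p <- Delta a) S p.1 * p.2 = eps a *: 1) &
      (forall a : A, \sum_(p <- Delta a) p.1 * S p.2 = eps a *: 1)].

Definition alg_hom (A B : algType k) (f : A -> B) : Prop :=
  [/\ linmap f, (forall x y : A, f (x * y) = f x * f y) & f 1 = 1].

Definition HM_map (H : lmodType k) (Delta : H -> tens2 H H) (eps : H -> k)
    (M B : algType k) (phi : H -> M -> B) : Prop :=
  [/\ bilin phi,
      (forall (h : H) (m n : M),
          phi h (m * n) = \sum_(p <- Delta h) phi p.1 m * phi p.2 n) &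
      (forall h : H, phi h 1 = eps h *: 1)].

Definition module_algebra_action (H : lmodType k) (mul : H -> H -> H)
    (one : H) (Delta : H -> tens2 H H) (eps : H -> k) (A : algType k)
    (act : H -> A -> A) : Prop :=
  [/\ bilin act,
      (forall (h g : H) (x : A), act (mul h g) x = act h (act g x)),
      (forall x : A, act one x = x),
      (forall (h : H) (x y : A),
          act h (x * y) = \sum_(p <- Delta h) act p.1 x * act p.2 y) &
      (forall h : H, act h 1 = eps h *: 1)].

End Defs.

From HB Require Import structures.
From mathcomp Require Import all_boot all_order all_algebra.
From mathcomp Require Import boolp ring.
Import Order.TTheory GRing.Theory Num.Theory.
Set Implicit Arguments. Unset Strict Implicit. Unset Printing Implicit Defensive.
Local Open Scope ring_scope.

(* [H(M)] is the free commutative k-algebra on symbols [h(m)] modulo the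
   relations making [h(m)] bilinear, [h(mn) = sum h'(m) h''(n)] and
   [h(1) = eps(h)]. It is built as a quotient of a term algebra, so that its
   universal property is evaluation of terms. Every further structure is
   first defined on terms and then shown to respect the congruence: [H] acts
   by [h(g(m)) = (hg)(m)], extended to products through the coproduct of [h];
   the coproduct of [h(m)] is [sum h'(m') (x) h''(m'')] and its counit is
   [eps(h) epsM(m)]. Respecting [h(mn) = sum h'(m) h''(n)] is where the
   cocommutativity of [H] enters: it makes the coproduct of [H] a coalgebra
   map. The antipode is the algebra map induced by [h(m) |-> h(S m)], which
   is well defined because the antipode of a commutative Hopf algebra is
   multiplicative. *)

Lemma exchange_big22 (R : zmodType) I J K L (A : seq I) (B : seq J) (C : seq K)
    (D : seq L) (F : I -> J -> K -> L -> R) :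
  \sum_(i <- A) \sum_(j <- B) \sum_(x <- C) \sum_(l <- D) F i j x l =
  \sum_(x <- C) \sum_(l <- D) \sum_(i <- A) \sum_(j <- B) F i j x l.
Proof.
under eq_bigr => i _ do rewrite exchange_big.
under eq_bigr => i _ do under eq_bigr => x _ do rewrite exchange_big.
by rewrite exchange_big; apply: eq_bigr => x _; apply: exchange_big.
Qed.

Section LinearMaps.
Variable k : comPzRingType.
Implicit Types U V W X : lmodType k.

Lemma linmap0 U V (f : U -> V) : linmap f -> f 0 = 0.
Proof.
move=> lf; have /eqP := lf 1 0 0.
by rewrite !scale1r addr0 eq_sym -subr_eq0 addrK => /eqP.
Qed.

Lemma linmapD U V (f : U -> V) : linmap f -> forall x y, f (x + y) = f x + f y.
Proof. by move=> lf x y; have := lf 1 x y; rewrite !scale1r. Qed.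

Lemma linmapZ U V (f : U -> V) : linmap f -> forall a x, f (a *: x) = a *: f x.
Proof. by move=> lf a x; have := lf a x 0; rewrite !addr0 (linmap0 lf) addr0. Qed.

Lemma linmap_sum U V (f : U -> V) : linmap f ->
  forall I (r : seq I) (F : I -> U), f (\sum_(i <- r) F i) = \sum_(i <- r) f (F i).
Proof.
move=> lf I r F; elim: r => [|i r IH]; first by rewrite !big_nil linmap0.
by rewrite !big_cons (linmapD lf) IH.
Qed.

Lemma linform0 U (f : U -> k) : linform f -> f 0 = 0.
Proof.
move=> lf; have /eqP := lf 1 0 0.
by rewrite !scale1r mul1r addr0 eq_sym -subr_eq0 addrK => /eqP.
Qed.

Lemma linformZ U (f : U -> k) : linform f -> forall a x, f (a *: x) = a * f x.
Proof. by move=> lf a x; have := lf a x 0; rewrite !addr0 (linform0 lf) addr0. Qed.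

Lemma linform_sum U (f : U -> k) : linform f ->
  forall I (r : seq I) (F : I -> U), f (\sum_(i <- r) F i) = \sum_(i <- r) f (F i).
Proof.
move=> lf I r F; elim: r => [|i r IH]; first by rewrite !big_nil linform0.
by rewrite !big_cons -IH -[F i]scale1r lf mul1r scale1r.
Qed.

Lemma linmap_comp U V W (f : V -> W) (g : U -> V) :
  linmap f -> linmap g -> linmap (fun x => f (g x)).
Proof. by move=> lf lg a x y; rewrite lg lf. Qed.

Lemma linmap_sumf U V I (r : seq I) (F : I -> U -> V) :
  (forall i, linmap (F i)) -> linmap (fun x => \sum_(i <- r) F i x).
Proof.
move=> lF a x y; rewrite scaler_sumr -big_split /=.
by apply: eq_bigr => i _; rewrite lF.
Qed.

Lemma linmap_mull (A : comAlgType k) U (f : U -> A) (c : A) :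
  linmap f -> linmap (fun x => c * f x).
Proof. by move=> lf a x y; rewrite lf mulrDr scalerAr. Qed.

Lemma linmap_mulr (A : comAlgType k) U (f : U -> A) (c : A) :
  linmap f -> linmap (fun x => f x * c).
Proof. by move=> lf a x y; rewrite lf mulrDl scalerAl. Qed.

Section Bilinear.
Variables (U V W : lmodType k) (b : U -> V -> W).
Hypothesis bb : bilin b.

Lemma bilinDl x x' y : b (x + x') y = b x y + b x' y.
Proof. exact: linmapD (proj1 bb y) x x'. Qed.
Lemma bilinDr x y y' : b x (y + y') = b x y + b x y'.
Proof. exact: linmapD (proj2 bb x) y y'. Qed.
Lemma bilinZl a x y : b (a *: x) y = a *: b x y.
Proof. exact: linmapZ (proj1 bb y) a x. Qed.
Lemma bilinZr a x y : b x (a *: y) = a *: b x y.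
Proof. exact: linmapZ (proj2 bb x) a y. Qed.
Lemma bilin0l y : b 0 y = 0.
Proof. exact: linmap0 (proj1 bb y). Qed.
Lemma bilin_suml I (r : seq I) (F : I -> U) y :
  b (\sum_(i <- r) F i) y = \sum_(i <- r) b (F i) y.
Proof. exact: linmap_sum (proj1 bb y) I r F. Qed.
Lemma bilin_sumr I (r : seq I) (F : I -> V) x :
  b x (\sum_(i <- r) F i) = \sum_(i <- r) b x (F i).
Proof. exact: linmap_sum (proj2 bb x) I r F. Qed.

Lemma bilin_swap : bilin (fun y x => b x y).
Proof. by case: bb. Qed.

Lemma bilin_comp U' V' (f : U' -> U) (g : V' -> V) :
  linmap f -> linmap g -> bilin (fun x y => b (f x) (g y)).
Proof.
move=> lf lg; split=> [v|u] a x y /=.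
- by rewrite lf bilinDl bilinZl.
- by rewrite lg bilinDr bilinZr.
Qed.

End Bilinear.

Lemma bilin_mul (A : comAlgType k) U V (f : U -> A) (g : V -> A) :
  linmap f -> linmap g -> bilin (fun x y => f x * g y).
Proof. by move=> lf lg; split=> [v|u]; [apply: linmap_mulr|apply: linmap_mull]. Qed.

Lemma bilin_sum U V W I (r : seq I) (F : I -> U -> V -> W) :
  (forall i, bilin (F i)) -> bilin (fun x y => \sum_(i <- r) F i x y).
Proof. by move=> bF; split=> [v|u]; apply: linmap_sumf => i; case: (bF i). Qed.

Lemma trilin_comp U V X U' V' X' W (t : U -> V -> X -> W)
    (f : U' -> U) (g : V' -> V) (h : X' -> X) :
  trilin t -> linmap f -> linmap g -> linmap h ->
  trilin (fun x y z => t (f x) (g y) (h z)).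
Proof.
move=> [t1 [t2 t3]] lf lg lh; split; [|split] => [y z|x z|x y] a u u' /=.
- by rewrite lf t1.
- by rewrite lg t2.
- by rewrite lh t3.
Qed.

Lemma trilin_sum U V X W I (r : seq I) (F : I -> U -> V -> X -> W) :
  (forall i, trilin (F i)) -> trilin (fun x y z => \sum_(i <- r) F i x y z).
Proof.
move=> tF; split; [|split] => [y z|x z|x y]; apply: linmap_sumf => i;
  by case: (tF i) => [t1 [t2 t3]].
Qed.

Lemma trilin_mul (A : comAlgType k) U V X (f : U -> A) (g : V -> A) (h : X -> A) :
  linmap f -> linmap g -> linmap h -> trilin (fun x y z => f x * g y * h z).
Proof.
move=> lf lg lh; split; [|split] => [y z|x z|x y] /=.
- exact/linmap_mulr/linmap_mulr.
- exact/linmap_mulr/linmap_mull.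
- exact: linmap_mull.
Qed.

Lemma bilin_trilin12 U V X W (t : U -> V -> X -> W) z :
  trilin t -> bilin (fun x y => t x y z).
Proof. by case=> t1 [t2 _]; split=> ? ? /=; [apply: t1|apply: t2]. Qed.

Lemma bilin_trilin23 U V X W (t : U -> V -> X -> W) x :
  trilin t -> bilin (fun y z => t x y z).
Proof. by case=> _ [t2 t3]; split=> ? ? /=; [apply: t2|apply: t3]. Qed.

End LinearMaps.

Section TensorRepresentatives.
Variable k : comPzRingType.

Section Teq2.
Variables U V : lmodType k.
Implicit Types l : tens2 U V.

Lemma teq2_sym l l' : teq2 l l' -> teq2 l' l.
Proof. by move=> e W b bb; rewrite (e W b bb). Qed.

Lemma teq2_trans l1 l2 l3 : teq2 l1 l2 -> teq2 l2 l3 -> teq2 l1 l3.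
Proof. by move=> e1 e2 W b bb; rewrite (e1 W b bb) (e2 W b bb). Qed.

Lemma teq2_cat l1 l1' l2 l2' :
  teq2 l1 l1' -> teq2 l2 l2' -> teq2 (l1 ++ l2) (l1' ++ l2').
Proof. by move=> e1 e2 W b bb; rewrite !big_cat (e1 W b bb) (e2 W b bb). Qed.

Lemma teq2_scale a l l' : teq2 l l' ->
  teq2 [seq (a *: p.1, p.2) | p <- l] [seq (a *: p.1, p.2) | p <- l'].
Proof.
move=> e W b bb; rewrite !big_map; apply: (e W (fun x y => b (a *: x) y)).
by apply: bilin_comp => // c x y; rewrite scalerDr !scalerA mulrC.
Qed.

Lemma teq2_swap l l' : teq2 l l' ->
  teq2 [seq (p.2, p.1) | p <- l] [seq (p.2, p.1) | p <- l'].
Proof. by move=> e W b bb; rewrite !big_map; apply: e (bilin_swap bb). Qed.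

Lemma teq2_swap_sum (l : tens2 U U) (W : lmodType k) (b : U -> U -> W) :
  teq2 [seq (p.2, p.1) | p <- l] l -> bilin b ->
  \sum_(p <- l) b p.2 p.1 = \sum_(p <- l) b p.1 p.2.
Proof. by move=> e bb; have := e W b bb; rewrite big_map. Qed.

End Teq2.

Definition tprod (A B : comAlgType k) (l m : tens2 A B) : tens2 A B :=
  [seq (p.1 * q.1, p.2 * q.2) | p <- l, q <- m].

Lemma teq2_tprod (A B : comAlgType k) (l l' m m' : tens2 A B) :
  teq2 l l' -> teq2 m m' -> teq2 (tprod l m) (tprod l' m').
Proof.
move=> e1 e2 W b bb; rewrite /tprod !big_allpairs_dep /=.
transitivity (\sum_(i <- l') \sum_(j <- m) b (i.1 * j.1) (i.2 * j.2)).
  rewrite exchange_big [RHS]exchange_big; apply: eq_bigr => j _.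
  apply: (e1 W (fun x y => b (x * j.1) (y * j.2))).
  by apply: bilin_comp => //; apply: linmap_mulr.
apply: eq_bigr => i _; apply: (e2 W (fun x y => b (i.1 * x) (i.2 * y))).
by apply: bilin_comp => //; apply: linmap_mull.
Qed.

End TensorRepresentatives.

Section Coalgebra.
Variables (k : comPzRingType) (C : lmodType k).
Variables (D : C -> tens2 C C) (e : C -> k).

Definition coprod_linear := forall (a : k) (c d : C),
  teq2 (D (a *: c + d)) ([seq (a *: p.1, p.2) | p <- D c] ++ D d).

Lemma coprod_sum_linmap (V : lmodType k) (G : C -> C -> V) :
  coprod_linear -> bilin G -> linmap (fun c => \sum_(p <- D c) G p.1 p.2).
Proof.
move=> DL bG a x y /=; rewrite (DL a x y V G bG) big_cat big_map scaler_sumr.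
by congr (_ + _); apply: eq_bigr => p _; rewrite (bilinZl bG).
Qed.

Hypothesis hC : is_coalgebra D e.

Lemma coalg_sum_linmap (V : lmodType k) (G : C -> C -> V) :
  bilin G -> linmap (fun c => \sum_(p <- D c) G p.1 p.2).
Proof. by apply: coprod_sum_linmap; case: hC. Qed.

Lemma coalg_coassoc (V : lmodType k) (t : C -> C -> C -> V) : trilin t ->
  forall c, \sum_(p <- D c) \sum_(q <- D p.1) t q.1 q.2 p.2 =
            \sum_(p <- D c) \sum_(q <- D p.2) t p.1 q.1 q.2.
Proof.
move=> tt c; case: hC => _ _ cA _ _.
have := cA c V t tt; rewrite !big_flatten /= !big_map.
by under eq_bigr do rewrite big_map; under [in RHS]eq_bigr do rewrite big_map.
Qed.

Lemma coalg_counitl (V : lmodType k) (f : C -> V) : linmap f ->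
  forall c, \sum_(p <- D c) e p.1 *: f p.2 = f c.
Proof.
move=> lf c; case: hC => _ _ _ cL _.
by rewrite -{2}(cL c) (linmap_sum lf); apply: eq_bigr => p _; rewrite (linmapZ lf).
Qed.

Lemma coalg_counitr (V : lmodType k) (f : C -> V) : linmap f ->
  forall c, \sum_(p <- D c) e p.2 *: f p.1 = f c.
Proof.
move=> lf c; case: hC => _ _ _ _ cR.
by rewrite -{2}(cR c) (linmap_sum lf); apply: eq_bigr => p _; rewrite (linmapZ lf).
Qed.

Lemma counit_coprod c : \sum_(p <- D c) e p.1 * e p.2 = e c.
Proof.
case: hC => eL _ _ cL _.
by rewrite -{2}(cL c) (linform_sum eL); apply: eq_bigr => p _; rewrite (linformZ eL).
Qed.

Hypothesis hcc : cocommutative D.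

Lemma coalg_cocomm (V : lmodType k) (G : C -> C -> V) : bilin G ->
  forall c, \sum_(p <- D c) G p.2 p.1 = \sum_(p <- D c) G p.1 p.2.
Proof. by move=> bG c; apply: teq2_swap_sum (hcc c) bG. Qed.

Lemma coalg_cocomm12 (V : lmodType k) (t : C -> C -> C -> V) : trilin t ->
  forall c, \sum_(p <- D c) \sum_(q <- D p.2) t p.1 q.1 q.2 =
            \sum_(p <- D c) \sum_(q <- D p.2) t q.1 p.1 q.2.
Proof.
move=> tt c.
have tt' : trilin (fun x y z => t y x z).
  by case: tt => t1 [t2 t3]; split; [|split] => ? ?; [apply: t2|apply: t1|apply: t3].
rewrite -(coalg_coassoc tt) -(coalg_coassoc tt'); apply: eq_bigr => p _.
by rewrite (coalg_cocomm (G := fun x y => t x y p.2)) //; apply: bilin_trilin12.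
Qed.

Definition quadlin (V : lmodType k) (G : C -> C -> C -> C -> V) :=
  [/\ forall y z w, linmap (fun x => G x y z w),
      forall x z w, linmap (fun y => G x y z w),
      forall x y w, linmap (fun z => G x y z w) &
      forall x y z, linmap (fun w => G x y z w)].

(* In Sweedler notation [c1 (x) c2 (x) c3 (x) c4 = c1 (x) c3 (x) c2 (x) c4]:
   for cocommutative [C] the coproduct is a coalgebra map [C -> C (x) C]. *)
Lemma coalg_interchange (V : lmodType k) (G : C -> C -> C -> C -> V) :
  quadlin G -> forall c,
  \sum_(p <- D c) \sum_(u <- D p.1) \sum_(v <- D p.2) G u.1 u.2 v.1 v.2 =
  \sum_(p <- D c) \sum_(u <- D p.1) \sum_(v <- D p.2) G u.1 v.1 u.2 v.2.
Proof.
case=> G1 G2 G3 G4 c.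
pose t1 x y z := \sum_(v <- D z) G x y v.1 v.2.
have tt1 : trilin t1.
  split; [|split] => [y z|x z|x y]; rewrite /t1; try exact: linmap_sumf.
  by apply: coalg_sum_linmap; split => ? ?; [apply: G3|apply: G4].
rewrite (coalg_coassoc tt1 c) /t1 /=.
have tG x : trilin (G x).
  by split; [|split] => ? ?; [apply: G2|apply: G3|apply: G4].
under eq_bigr => p _ do rewrite (coalg_cocomm12 (tG p.1)) /=.
pose t2 x y z := \sum_(v <- D z) G x v.1 y v.2.
have tt2 : trilin t2.
  split; [|split] => [y z|x z|x y]; rewrite /t2; try exact: linmap_sumf.
  by apply: (coalg_sum_linmap (G := fun p q => G x p y q)); split => ? ?;
    [apply: G2|apply: G4].
by have := coalg_coassoc tt2 c; rewrite /t2 /= => ->.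
Qed.

End Coalgebra.

Section CommutativeHopf.
Variables (k : comPzRingType) (M : comAlgType k).
Variables (D : M -> tens2 M M) (e : M -> k) (S : M -> M).
Hypotheses (hM : is_bialgebra_on D e) (hS : is_antipode D e S).

Let hMco : is_coalgebra D e. Proof. by case: hM. Qed.
Let SL : linmap S. Proof. by case: hS. Qed.
Let SM_bilin : bilin (fun u v : M => S u * v). Proof. exact: bilin_mul. Qed.

Lemma antipode1 : S 1 = 1.
Proof.
have [_ [_ D1 _ e1]] := hM; have [_ AL _] := hS.
by have := AL 1; rewrite (D1 _ _ SM_bilin) e1 big_seq1 mulr1 scale1r.
Qed.

(* [sum S(x1 y1) x2 y2 S(x3) S(y3)], which collapses to [S(xy)] on the right
   and to [S(x) S(y)] on the left. *)
Let sandwich x y :=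
  \sum_(p <- D x) \sum_(r <- D p.1) \sum_(q <- D y) \sum_(s <- D q.1)
    S (r.1 * s.1) * (r.2 * S p.2) * (s.2 * S q.2).

Lemma sandwich_antipodeM x y : sandwich x y = S (x * y).
Proof.
have [_ _ AR] := hS.
transitivity (\sum_(p <- D x) \sum_(q <- D y) \sum_(r <- D p.2) \sum_(s <- D q.2)
   S (p.1 * q.1) * (r.1 * S r.2) * (s.1 * S s.2)); last first.
  rewrite -(coalg_counitr hMco (f := fun a => S (a * y))); last first.
    exact/linmap_comp/linmap_mulr.
  apply: eq_bigr => p _.
  rewrite -(coalg_counitr hMco (f := fun b => S (p.1 * b))); last first.
    exact/linmap_comp/linmap_mull.
  rewrite scaler_sumr; apply: eq_bigr => q _.
  under eq_bigr => r _ do rewrite -mulr_sumr (AR q.2).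
  by rewrite -mulr_suml -mulr_sumr (AR p.2) !mulr_algr !scalerA mulrC.
rewrite /sandwich exchange_big /=.
have t1 (q : M * M) : trilin (fun a b c => \sum_(s <- D q.2)
    S (a * q.1) * (b * S c) * (s.1 * S s.2)).
  apply: trilin_sum => s; split; [|split] => [b c|a c|a b] /=.
  - exact/linmap_mulr/linmap_mulr/linmap_comp/linmap_mulr.
  - exact/linmap_mulr/linmap_mull/linmap_mulr.
  - exact/linmap_mulr/linmap_mull/linmap_mull.
under [RHS]eq_bigr => q _ do rewrite -(coalg_coassoc hMco (t1 q) x) /=.
rewrite exchange_big; apply: eq_bigr => p _; rewrite [RHS]exchange_big /=.
apply: eq_bigr => u _.
have t2 : trilin (fun a b c => S (u.1 * a) * (u.2 * S p.2) * (b * S c)).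
  split; [|split] => [b c|a c|a b] /=.
  - exact/linmap_mulr/linmap_mulr/linmap_comp/linmap_mull.
  - exact/linmap_mull/linmap_mulr.
  - exact/linmap_mull/linmap_mull/linmap_comp.
exact: (coalg_coassoc hMco t2 y).
Qed.

Lemma sandwich_mul_antipode x y : sandwich x y = S x * S y.
Proof.
have [_ [DM _ eM _]] := hM; have [_ AL _] := hS.
transitivity (\sum_(p <- D x) \sum_(q <- D y) (e p.1 * e q.1) *: (S p.2 * S q.2)).
  apply: eq_bigr => p _; rewrite exchange_big /=; apply: eq_bigr => q _.
  rewrite -eM -[S p.2 * S q.2]mul1r scalerAl -(AL (p.1 * q.1)).
  rewrite (DM p.1 q.1 _ _ SM_bilin) big_allpairs_dep /= mulr_suml.
  by apply: eq_bigr => r _; rewrite mulr_suml; apply: eq_bigr => s _; ring.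
rewrite -(coalg_counitl hMco SL x) -(coalg_counitl hMco SL y) mulr_suml.
apply: eq_bigr => p _; rewrite mulr_sumr; apply: eq_bigr => q _.
by rewrite -scalerAl -scalerAr scalerA.
Qed.

Lemma antipodeM x y : S (x * y) = S x * S y.
Proof. by rewrite -sandwich_antipodeM sandwich_mul_antipode. Qed.

End CommutativeHopf.

Section FreeConstruction.
Variables (k : comPzRingType) (M : comAlgType k) (H : lmodType k).
Variables (Delta : H -> tens2 H H) (eps : H -> k).

Inductive term : Type :=
| TVar of H & M
| TCst of k
| TAdd of term & term
| TScl of k & term
| TMul of term & term.

Definition tsum (l : seq term) := foldr TAdd (TCst 0) l.

Inductive hm_rel : term -> term -> Prop :=
| RlinH a h h' m :
    hm_rel (TVar (a *: h + h') m) (TAdd (TScl a (TVar h m)) (TVar h' m))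
| RlinM a h m m' :
    hm_rel (TVar h (a *: m + m')) (TAdd (TScl a (TVar h m)) (TVar h m'))
| Rmul h m n :
    hm_rel (TVar h (m * n))
           (tsum [seq TMul (TVar p.1 m) (TVar p.2 n) | p <- Delta h])
| Rone h : hm_rel (TVar h 1) (TCst (eps h)).

(* [- t] is encoded as [TScl (-1) t] and [a%:A] as [TCst a]. *)
Inductive hm_eqv : term -> term -> Prop :=
| Erefl t : hm_eqv t t
| Esym t u : hm_eqv t u -> hm_eqv u t
| Etrans t u v : hm_eqv t u -> hm_eqv u v -> hm_eqv t v
| EAdd t t' u u' : hm_eqv t t' -> hm_eqv u u' -> hm_eqv (TAdd t u) (TAdd t' u')
| EScl a t t' : hm_eqv t t' -> hm_eqv (TScl a t) (TScl a t')
| EMul t t' u u' : hm_eqv t t' -> hm_eqv u u' -> hm_eqv (TMul t u) (TMul t' u')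
| EAddA t u v : hm_eqv (TAdd t (TAdd u v)) (TAdd (TAdd t u) v)
| EAddC t u : hm_eqv (TAdd t u) (TAdd u t)
| EAdd0 t : hm_eqv (TAdd (TCst 0) t) t
| EAddN t : hm_eqv (TAdd (TScl (-1) t) t) (TCst 0)
| ESclA a b t : hm_eqv (TScl a (TScl b t)) (TScl (a * b) t)
| EScl1 t : hm_eqv (TScl 1 t) t
| ESclDr a t u : hm_eqv (TScl a (TAdd t u)) (TAdd (TScl a t) (TScl a u))
| ESclDl a b t : hm_eqv (TScl (a + b) t) (TAdd (TScl a t) (TScl b t))
| EMulA t u v : hm_eqv (TMul t (TMul u v)) (TMul (TMul t u) v)
| EMulC t u : hm_eqv (TMul t u) (TMul u t)
| EMul1 t : hm_eqv (TMul (TCst 1) t) t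
| EMulDl t u v : hm_eqv (TMul (TAdd t u) v) (TAdd (TMul t v) (TMul u v))
| EMulZl a t u : hm_eqv (TMul (TScl a t) u) (TScl a (TMul t u))
| ECst a : hm_eqv (TCst a) (TScl a (TCst 1))
| ERel t u : hm_rel t u -> hm_eqv t u.

(* A class is the predicate [hm_eqv t]; representatives are picked by choice
   and equal classes are equal by extensionality. *)
Record hm_quot := HMClass {
  hm_class : term -> Prop;
  hm_classP : exists t, hm_class = hm_eqv t }.
HB.instance Definition _ := gen_eqMixin hm_quot.
HB.instance Definition _ := gen_choiceMixin hm_quot.

Definition cls (t : term) : hm_quot := @HMClass (hm_eqv t) (ex_intro _ t erefl).
Definition rep (q : hm_quot) : term := projT1 (cid (hm_classP q)).

Lemma repK q : cls (rep q) = q.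
Proof.
case: q => c P; rewrite /rep /=; case: (cid P) => t /= ct.
by move: P; rewrite ct => P; congr HMClass; apply: Prop_irrelevance.
Qed.

Lemma eqv_cls t u : hm_eqv t u -> cls t = cls u.
Proof.
move=> tu; have E : hm_eqv t = hm_eqv u.
  by apply/funext => v; apply/propext; split; apply: Etrans; [apply: Esym|].
rewrite /cls; move: (ex_intro _ t _) (ex_intro _ u _); rewrite E => P1 P2.
by congr HMClass; apply: Prop_irrelevance.
Qed.

Lemma cls_eqv t u : cls t = cls u -> hm_eqv t u.
Proof. by move=> /(congr1 hm_class) /= ->; apply: Erefl. Qed.

Lemma eqv_rep_cls t : hm_eqv (rep (cls t)) t.
Proof. by apply: cls_eqv; rewrite repK. Qed.

Lemma quot_ind (P : hm_quot -> Prop) : (forall t, P (cls t)) -> forall q, P q.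
Proof. by move=> Pt q; rewrite -(repK q). Qed.

Definition qadd q r := cls (TAdd (rep q) (rep r)).
Definition qopp q := cls (TScl (-1) (rep q)).
Definition qscl a q := cls (TScl a (rep q)).
Definition qmul q r := cls (TMul (rep q) (rep r)).

Lemma qaddE t u : qadd (cls t) (cls u) = cls (TAdd t u).
Proof. by apply: eqv_cls; apply: EAdd; apply: eqv_rep_cls. Qed.
Lemma qsclE a t : qscl a (cls t) = cls (TScl a t).
Proof. by apply: eqv_cls; apply: EScl; apply: eqv_rep_cls. Qed.
Lemma qmulE t u : qmul (cls t) (cls u) = cls (TMul t u).
Proof. by apply: eqv_cls; apply: EMul; apply: eqv_rep_cls. Qed.

Lemma qaddA : associative qadd.
Proof.
by elim/quot_ind => t; elim/quot_ind => u; elim/quot_ind => v;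
  rewrite !qaddE; apply/eqv_cls/EAddA.
Qed.
Lemma qaddC : commutative qadd.
Proof.
by elim/quot_ind => t; elim/quot_ind => u; rewrite !qaddE; apply/eqv_cls/EAddC.
Qed.
Lemma qadd0 : left_id (cls (TCst 0)) qadd.
Proof. by elim/quot_ind => t; rewrite qaddE; apply/eqv_cls/EAdd0. Qed.
Lemma qaddN : left_inverse (cls (TCst 0)) qopp qadd.
Proof. by elim/quot_ind => t; rewrite [qopp _]qsclE qaddE; apply/eqv_cls/EAddN. Qed.

HB.instance Definition _ := GRing.isZmodule.Build hm_quot qaddA qaddC qadd0 qaddN.

Lemma qsclA a b v : qscl a (qscl b v) = qscl (a * b) v.
Proof. by elim/quot_ind: v => t; rewrite !qsclE; apply/eqv_cls/ESclA. Qed.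
Lemma qscl1 : left_id 1 qscl.
Proof. by elim/quot_ind => t; rewrite qsclE; apply/eqv_cls/EScl1. Qed.
Lemma qsclDr : right_distributive qscl qadd.
Proof.
by move=> a; elim/quot_ind => t; elim/quot_ind => u;
  rewrite !(qsclE, qaddE); apply/eqv_cls/ESclDr.
Qed.
Lemma qsclDl v : {morph qscl^~ v : a b / a + b >-> qadd a b}.
Proof.
by move=> a b; elim/quot_ind: v => t; rewrite !(qsclE, qaddE); apply/eqv_cls/ESclDl.
Qed.

HB.instance Definition _ :=
  GRing.Zmodule_isLmodule.Build k hm_quot qsclA qscl1 qsclDr qsclDl.

Lemma qmulA : associative qmul.
Proof.
by elim/quot_ind => t; elim/quot_ind => u; elim/quot_ind => v;
  rewrite !qmulE; apply/eqv_cls/EMulA.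
Qed.
Lemma qmulC : commutative qmul.
Proof.
by elim/quot_ind => t; elim/quot_ind => u; rewrite !qmulE; apply/eqv_cls/EMulC.
Qed.
Lemma qmul1 : left_id (cls (TCst 1)) qmul.
Proof. by elim/quot_ind => t; rewrite qmulE; apply/eqv_cls/EMul1. Qed.
Lemma qmulDl : left_distributive qmul qadd.
Proof.
by elim/quot_ind => t; elim/quot_ind => u; elim/quot_ind => v;
  rewrite !(qmulE, qaddE); apply/eqv_cls/EMulDl.
Qed.

HB.instance Definition _ :=
  GRing.Zmodule_isComPzRing.Build hm_quot qmulA qmulC qmul1 qmulDl.

Lemma clsD t u : cls t + cls u = cls (TAdd t u). Proof. exact: qaddE. Qed.
Lemma clsZ a t : a *: cls t = cls (TScl a t). Proof. exact: qsclE. Qed.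
Lemma clsM t u : cls t * cls u = cls (TMul t u). Proof. exact: qmulE. Qed.
Lemma cls1 : cls (TCst 1) = 1. Proof. by []. Qed.
Lemma clsC a : cls (TCst a) = a *: (1 : hm_quot).
Proof. by rewrite -cls1 clsZ; apply/eqv_cls/ECst. Qed.
Lemma cls_tsum l : cls (tsum l) = \sum_(t <- l) cls t.
Proof. by elim: l => [|t l IH] /=; rewrite ?big_nil ?big_cons -?IH ?clsD. Qed.

Lemma cls_rel t u : hm_rel t u -> cls t = cls u.
Proof. by move=> r; apply/eqv_cls/ERel. Qed.

Lemma quot_scalerAl a (u v : hm_quot) : a *: (u * v) = (a *: u) * v.
Proof.
elim/quot_ind: u => t; elim/quot_ind: v => u.
by rewrite !(clsM, clsZ); apply/eqv_cls/Esym/EMulZl.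
Qed.

Section Evaluation.
Variables (A : comPzRingType) (sc : {rmorphism k -> A}) (v : H -> M -> A).

Fixpoint evalT (t : term) : A :=
  match t with
  | TVar h m => v h m
  | TCst a => sc a
  | TAdd t u => evalT t + evalT u
  | TScl a t => sc a * evalT t
  | TMul t u => evalT t * evalT u
  end.

Lemma evalT_tsum l : evalT (tsum l) = \sum_(t <- l) evalT t.
Proof. by elim: l => [|t l IH] /=; rewrite ?big_nil ?big_cons ?rmorph0 ?IH. Qed.

Hypothesis v_rel : forall t u, hm_rel t u -> evalT t = evalT u.

Lemma evalT_eqv t u : hm_eqv t u -> evalT t = evalT u.
Proof.
elim=> {t u} /=.
- by [].
- by move=> t u _ ->.
- by move=> t u w _ -> _ ->.
- by move=> t t' u u' _ -> _ ->.
- by move=> a t t' _ ->.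
- by move=> t t' u u' _ -> _ ->.
- by move=> t u w; rewrite addrA.
- by move=> t u; rewrite addrC.
- by move=> t; rewrite rmorph0 add0r.
- by move=> t; rewrite rmorphN1 mulN1r addNr rmorph0.
- by move=> a b t; rewrite mulrA rmorphM.
- by move=> t; rewrite rmorph1 mul1r.
- by move=> a t u; rewrite mulrDr.
- by move=> a b t; rewrite rmorphD mulrDl.
- by move=> t u w; rewrite mulrA.
- by move=> t u; rewrite mulrC.
- by move=> t; rewrite rmorph1 mul1r.
- by move=> t u w; rewrite mulrDl.
- by move=> a t u; rewrite mulrA.
- by move=> a; rewrite rmorph1 mulr1.
- exact: v_rel.
Qed.

Definition evalQ (q : hm_quot) : A := evalT (rep q).

Lemma evalQ_cls t : evalQ (cls t) = evalT t.
Proof. exact/evalT_eqv/eqv_rep_cls. Qed.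

Lemma evalQ_lin a x y : evalQ (a *: x + y) = sc a * evalQ x + evalQ y.
Proof.
by elim/quot_ind: x => t; elim/quot_ind: y => u; rewrite clsZ clsD !evalQ_cls.
Qed.

Lemma evalQM x y : evalQ (x * y) = evalQ x * evalQ y.
Proof.
by elim/quot_ind: x => t; elim/quot_ind: y => u; rewrite clsM !evalQ_cls.
Qed.

Lemma evalQ1 : evalQ 1 = 1.
Proof. by rewrite -cls1 evalQ_cls /= rmorph1. Qed.

End Evaluation.

End FreeConstruction.

Arguments TCst {k M H}.

Section UniversalAlgebra.
Variables (k : comPzRingType) (M : comAlgType k) (H : lmodType k).
Variables (Delta : H -> tens2 H H) (eps : H -> k).
Hypothesis hco : is_coalgebra Delta eps.

Local Notation hm_quot := (hm_quot M Delta eps).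

Lemma HM_map_rel (B : comAlgType k) (psi : H -> M -> B) :
  HM_map Delta eps psi ->
  forall t u, hm_rel Delta eps t u ->
  evalT (GRing.in_alg B) psi t = evalT (GRing.in_alg B) psi u.
Proof.
case=> [[psiH psiM] psi_mul psi1] t u [a h h' m|a h m m'|h m n|h] /=.
- by rewrite psiH mulr_algl.
- by rewrite psiM mulr_algl.
- by rewrite evalT_tsum big_map psi_mul.
- by rewrite psi1.
Qed.

Lemma HM_map_counit : HM_map Delta eps (fun h (m : M) => eps h *: m).
Proof.
have [epsL _ _ _ _] := hco.
split.
- split=> [m|h] a x y /=; first by rewrite epsL scalerDl scalerA.
  by rewrite scalerDr !scalerA mulrC.
- move=> h m n; rewrite -{1}(counit_coprod hco h) scaler_suml.
  by apply: eq_bigr => p _; rewrite -scalerAl -scalerAr !scalerA mulrC.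
- by [].
Qed.

Lemma hm_quot_nonzero : (1 : hm_quot) != 0.
Proof.
have counit_rel := HM_map_rel HM_map_counit.
apply/eqP => /(congr1 (evalQ (GRing.in_alg M) (fun h m => eps h *: m))).
rewrite -cls1 -[0 : hm_quot]/(cls Delta eps (TCst 0)) !(evalQ_cls counit_rel) /=.
by rewrite scale1r scale0r => /eqP; rewrite oner_eq0.
Qed.

(* [HMT] is [hm_quot] indexed by the coalgebra axioms, so that the
   nontriviality instance, which depends on them, can be canonical. *)
Definition HMT (_ : is_coalgebra Delta eps) : Type := hm_quot.
HB.instance Definition _ := GRing.ComPzRing.copy (HMT hco) hm_quot.
HB.instance Definition _ := GRing.Lmodule.copy (HMT hco) hm_quot.
HB.instance Definition _ :=
  GRing.PzSemiRing_isNonZero.Build (HMT hco) hm_quot_nonzero.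
HB.instance Definition _ :=
  GRing.Lmodule_isLalgebra.Build k (HMT hco) (@quot_scalerAl _ _ _ Delta eps).
HB.instance Definition _ := GRing.Lalgebra_isComAlgebra.Build k (HMT hco).

Definition HM : comAlgType k := HMT hco.
Definition phi (h : H) (m : M) : HM := cls Delta eps (TVar h m).

Lemma phi_HM_map : HM_map Delta eps phi.
Proof.
split.
- by split=> [m|h] a x y; rewrite /phi clsZ clsD; apply: cls_rel; constructor.
- move=> h m n; rewrite /phi (cls_rel (Rmul _ _ _ _ _)) cls_tsum big_map.
  by apply: eq_bigr => p _; rewrite -clsM.
- by move=> h; rewrite /phi (cls_rel (Rone _ _ _ _)) clsC.
Qed.

Section Universality.
Variables (B : comAlgType k) (psi : H -> M -> B).
Hypothesis hpsi : HM_map Delta eps psi.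

Definition univ (x : HM) : B := evalQ (GRing.in_alg B) psi x.

Let psi_rel := HM_map_rel hpsi.

Let univ_cls t : univ (cls Delta eps t) = evalT (GRing.in_alg B) psi t.
Proof. exact: evalQ_cls psi_rel t. Qed.

Lemma univ_alg_hom : alg_hom univ.
Proof.
split; [move=> a x y|exact: (evalQM psi_rel)|exact: (evalQ1 psi_rel)].
by rewrite /univ (evalQ_lin psi_rel) /= mulr_algl.
Qed.

Lemma univ_phi h m : univ (phi h m) = psi h m.
Proof. exact: univ_cls. Qed.

Lemma univ_unique (g : HM -> B) : alg_hom g ->
  (forall h m, g (phi h m) = psi h m) -> g =1 univ.
Proof.
case=> gL gM g1 gphi; elim/quot_ind => t; rewrite univ_cls.
elim: t => /= [h m|a|t IHt u IHu|a t IHt|t IHt u IHu].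
- exact: gphi.
- by rewrite clsC (linmapZ gL) g1.
- by rewrite -clsD (linmapD gL) IHt IHu.
- by rewrite -clsZ (linmapZ gL) IHt mulr_algl.
- by rewrite -clsM gM IHt IHu.
Qed.

End Universality.

End UniversalAlgebra.

Section ModuleAlgebra.
Variables (k : comPzRingType) (M : comAlgType k) (H : lmodType k).
Variables (Delta : H -> tens2 H H) (eps : H -> k).
Variables (mul : H -> H -> H) (one : H).
Hypotheses (hco : is_coalgebra Delta eps) (hcc : cocommutative Delta).
Hypothesis hbi : is_bialgebra mul one Delta eps.

Local Notation HM := (HM M hco).
Local Notation cls := (fun t => cls Delta eps t : HM).

Let mulL : bilin mul. Proof. by case: hbi => -[]. Qed.
Let DeltaM x y : teq2 (Delta (mul x y))
    [seq (mul p.1 q.1, mul p.2 q.2) | p <- Delta x, q <- Delta y].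
Proof. by case: hbi => _ _ []. Qed.

Fixpoint actT (t : term M H) (h : H) : HM :=
  match t with
  | TVar g m => cls (TVar (mul h g) m)
  | TCst a => (a * eps h) *: 1
  | TAdd t u => actT t h + actT u h
  | TScl a t => a *: actT t h
  | TMul t u => \sum_(p <- Delta h) actT t p.1 * actT u p.2
  end.

Lemma actT_lin t : linmap (actT t).
Proof.
have [epsL _ _ _ _] := hco.
elim: t => /= [g m|a|t IHt u IHu|a t IHt|t IHt u IHu] b x y.
- by rewrite (bilinDl mulL) (bilinZl mulL) clsZ clsD; apply: cls_rel; constructor.
- by rewrite epsL mulrDr scalerDl mulrCA scalerA.
- by rewrite IHt IHu scalerDr addrACA.
- by rewrite IHt scalerDr !scalerA mulrC.
- exact/(coalg_sum_linmap hco (G := fun p q => actT t p * actT u q))/bilin_mul.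
Qed.

Lemma actT_tsum l h : actT (tsum l) h = \sum_(t <- l) actT t h.
Proof. by elim: l => [|t l IH] /=; rewrite ?big_nil ?mul0r ?scale0r // big_cons IH. Qed.

Lemma actT_rel t u : hm_rel Delta eps t u -> actT t =1 actT u.
Proof.
have [_ _ [_ _ epsM _]] := hbi.
case=> /= [a g g' m|a g m m'|g m n|g] h.
- by rewrite (bilinDr mulL) (bilinZr mulL) clsZ clsD; apply: cls_rel; constructor.
- by rewrite clsZ clsD; apply: cls_rel; constructor.
- rewrite actT_tsum big_map (cls_rel (Rmul _ _ _ _ _)) cls_tsum big_map /=.
  under eq_bigr do rewrite -clsM.
  have phiL : bilin (fun x y => cls (TVar x m) * cls (TVar y n)).
    by apply: bilin_mul => b x y /=; rewrite clsZ clsD; apply: cls_rel; constructor.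
  by rewrite (DeltaM h g phiL) big_allpairs_dep exchange_big.
- by rewrite (cls_rel (Rone _ _ _ _)) clsC epsM mulrC.
Qed.

Lemma actT_eqv t u : hm_eqv Delta eps t u -> actT t =1 actT u.
Proof.
elim=> {t u} /=.
- by [].
- by move=> t u _ IH h; rewrite IH.
- by move=> t u v _ IH1 _ IH2 h; rewrite IH1 IH2.
- by move=> t t' u u' _ IH1 _ IH2 h; rewrite IH1 IH2.
- by move=> a t t' _ IH h; rewrite IH.
- by move=> t t' u u' _ IH1 _ IH2 h; apply: eq_bigr => p _; rewrite IH1 IH2.
- by move=> t u v h; rewrite addrA.
- by move=> t u h; rewrite addrC.
- by move=> t h; rewrite mul0r scale0r add0r.
- by move=> t h; rewrite scaleN1r addNr mul0r scale0r.
- by move=> a b t h; rewrite scalerA.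
- by move=> t h; rewrite scale1r.
- by move=> a t u h; rewrite scalerDr.
- by move=> a b t h; rewrite scalerDl.
- move=> t u v h.
  under eq_bigr do rewrite mulr_sumr; under [RHS]eq_bigr do rewrite mulr_suml.
  rewrite (coalg_coassoc hco (trilin_mul (actT_lin t) (actT_lin u) (actT_lin v))).
  by apply: eq_bigr => p _; apply: eq_bigr => q _; rewrite mulrA.
- move=> t u h; rewrite -(coalg_cocomm hcc (bilin_mul (actT_lin u) (actT_lin t))).
  by apply: eq_bigr => p _; rewrite mulrC.
- move=> t h; under eq_bigr do rewrite mul1r -scalerAl mul1r.
  exact: (coalg_counitl hco (actT_lin t)).
- by move=> t u v h; rewrite -big_split; apply: eq_bigr => p _; rewrite mulrDl.
- by move=> a t u h; rewrite scaler_sumr; apply: eq_bigr => p _; rewrite scalerAl.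
- by move=> a h; rewrite mul1r scalerA.
- exact: actT_rel.
Qed.

Definition act (h : H) (x : HM) : HM := actT (rep x) h.

Lemma act_cls h t : act h (cls t) = actT t h.
Proof. exact/actT_eqv/eqv_rep_cls. Qed.

Lemma act_linr h : linmap (act h).
Proof.
by move=> a; elim/quot_ind => t; elim/quot_ind => u; rewrite clsZ clsD !act_cls.
Qed.

Lemma act_linl x : linmap (act^~ x).
Proof. by elim/quot_ind: x => t a x y; rewrite !act_cls; apply: actT_lin. Qed.

Lemma actM h (x y : HM) :
  act h (x * y) = \sum_(p <- Delta h) act p.1 x * act p.2 y.
Proof.
elim/quot_ind: x => t; elim/quot_ind: y => u.
by rewrite clsM !act_cls; apply: eq_bigr => p _; rewrite !act_cls.
Qed.

Lemma act1 h : act h 1 = eps h *: 1.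
Proof. by rewrite -cls1 act_cls /= mul1r. Qed.

Lemma actT_mul t h g : actT t (mul h g) = act h (actT t g).
Proof.
have [_ _ [_ _ epsM _]] := hbi; have [[_ mulA _ _] _ _] := hbi.
elim: t h g => /= [g0 m|a|t IHt u IHu|a t IHt|t IHt u IHu] h g.
- by rewrite act_cls /= mulA.
- by rewrite (linmapZ (act_linr h)) act1 scalerA epsM (mulrC (eps h)) mulrA.
- by rewrite (linmapD (act_linr h)) IHt IHu.
- by rewrite (linmapZ (act_linr h)) IHt.
- rewrite (linmap_sum (act_linr h)); under [RHS]eq_bigr do rewrite actM.
  rewrite (DeltaM h g (bilin_mul (actT_lin t) (actT_lin u))) big_allpairs_dep.
  rewrite exchange_big; apply: eq_bigr => q _; apply: eq_bigr => p _.
  by rewrite IHt IHu.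
Qed.

Lemma actT_one t : actT t one = cls t.
Proof.
have [[_ _ mul1h _] _ [_ Done _ eps1]] := hbi.
elim: t => /= [g m|a|t IHt u IHu|a t IHt|t IHt u IHu].
- by rewrite mul1h.
- by rewrite eps1 mulr1 clsC.
- by rewrite IHt IHu clsD.
- by rewrite IHt clsZ.
- by rewrite (Done _ _ (bilin_mul (actT_lin t) (actT_lin u))) big_seq1 IHt IHu clsM.
Qed.

Lemma act_module_algebra : module_algebra_action mul one Delta eps act.
Proof.
split; [by split; [exact: act_linl|exact: act_linr]| | |exact: actM|exact: act1].
- by move=> h g; elim/quot_ind => t; rewrite !act_cls actT_mul.
- by elim/quot_ind => t; rewrite act_cls actT_one.
Qed.

Lemma act_phi h1 h2 m : act h1 (phi hco h2 m) = phi hco (mul h1 h2) m.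
Proof. exact: act_cls. Qed.

End ModuleAlgebra.

Section Bialgebra.
Variables (k : comPzRingType) (M : comAlgType k) (H : lmodType k).
Variables (Delta : H -> tens2 H H) (eps : H -> k).
Variables (DeltaM : M -> tens2 M M) (epsM : M -> k).
Hypotheses (hco : is_coalgebra Delta eps) (hcc : cocommutative Delta).
Hypotheses (hM : is_bialgebra_on DeltaM epsM) (hMc : cocommutative DeltaM).

Local Notation HM := (HM M hco).
Local Notation cls := (fun t => cls Delta eps t : HM).
Local Notation phi := (@phi _ M _ _ _ hco).

Let hMco : is_coalgebra DeltaM epsM. Proof. by case: hM. Qed.
Let phiH m : linmap (phi^~ m). Proof. by case: (phi_HM_map M hco) => -[]. Qed.
Let phiM h : linmap (phi h). Proof. by case: (phi_HM_map M hco) => -[]. Qed.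
Let phi_mul h m n : phi h (m * n) = \sum_(u <- Delta h) phi u.1 m * phi u.2 n.
Proof. by case: (phi_HM_map M hco). Qed.
Let phi1 h : phi h 1 = eps h *: 1. Proof. by case: (phi_HM_map M hco). Qed.

Let bilin_phiH (W : lmodType k) (b : HM -> HM -> W) m n :
  bilin b -> bilin (fun x y => b (phi x m) (phi y n)).
Proof. by move=> bb; apply: bilin_comp. Qed.

Let bilin_phiM (W : lmodType k) (b : HM -> HM -> W) h g :
  bilin b -> bilin (fun m n => b (phi h m) (phi g n)).
Proof. by move=> bb; apply: bilin_comp. Qed.

Fixpoint DT (t : term M H) : tens2 HM HM :=
  match t with
  | TVar h m => [seq (phi p.1 q.1, phi p.2 q.2) | p <- Delta h, q <- DeltaM m]
  | TCst a => [:: (a *: 1, 1)]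
  | TAdd t u => DT t ++ DT u
  | TScl a t => [seq (a *: p.1, p.2) | p <- DT t]
  | TMul t u => tprod (DT t) (DT u)
  end.

Section BilinearImages.
Variables (W : lmodType k) (b : HM -> HM -> W).
Hypothesis bb : bilin b.

Lemma DT_TVar_sum h m : \sum_(p <- DT (TVar h m)) b p.1 p.2 =
  \sum_(p <- Delta h) \sum_(q <- DeltaM m) b (phi p.1 q.1) (phi p.2 q.2).
Proof. exact: big_allpairs_dep. Qed.

Lemma DT_tsum l :
  \sum_(p <- DT (tsum l)) b p.1 p.2 = \sum_(t <- l) \sum_(p <- DT t) b p.1 p.2.
Proof.
elim: l => [|t l IH] /=; last by rewrite big_cat big_cons IH.
by rewrite big_nil big_seq1 scale0r bilin0l.
Qed.

End BilinearImages.

Lemma DT_RlinH a h h' m :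
  teq2 (DT (TVar (a *: h + h') m)) (DT (TAdd (TScl a (TVar h m)) (TVar h' m))).
Proof.
move=> W b bb; rewrite big_cat big_map !DT_TVar_sum.
have bS := bilin_sum (DeltaM m) (fun q => bilin_phiH q.1 q.2 bb).
rewrite (coalg_sum_linmap hco bS) big_allpairs_dep scaler_sumr; congr (_ + _).
apply: eq_bigr => p _; rewrite scaler_sumr.
by apply: eq_bigr => q _; rewrite (bilinZl bb).
Qed.

Lemma DT_RlinM a h m m' :
  teq2 (DT (TVar h (a *: m + m'))) (DT (TAdd (TScl a (TVar h m)) (TVar h m'))).
Proof.
move=> W b bb; rewrite big_cat big_map !DT_TVar_sum.
rewrite exchange_big [X in _ = _ + X]exchange_big /=.
have bS := bilin_sum (Delta h) (fun p => bilin_phiM p.1 p.2 bb).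
rewrite (coalg_sum_linmap hMco bS) big_allpairs_dep scaler_sumr; congr (_ + _).
rewrite [RHS]exchange_big; apply: eq_bigr => q _; rewrite scaler_sumr.
by apply: eq_bigr => p _; rewrite (bilinZl bb).
Qed.

Lemma DT_Rone h : teq2 (DT (TVar h 1)) (DT (TCst (eps h))).
Proof.
have [_ [_ DM1 _ _]] := hM.
move=> W b bb; rewrite DT_TVar_sum big_seq1 /=.
under eq_bigr => p _ do rewrite (DM1 _ _ (bilin_phiM p.1 p.2 bb)) big_seq1 /=.
under eq_bigr do rewrite !phi1 (bilinZl bb) (bilinZr bb) scalerA.
by rewrite -scaler_suml (counit_coprod hco) (bilinZl bb).
Qed.

Section MulRelation.
Variables (W : lmodType k) (b : HM -> HM -> W) (m n : M).
Hypothesis bb : bilin b.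

Let G a1 a2 c1 c2 := \sum_(r <- DeltaM m) \sum_(s <- DeltaM n)
  b (phi a1 r.1 * phi a2 s.1) (phi c1 r.2 * phi c2 s.2).

Let G_quadlin : quadlin G.
Proof.
split=> * ; apply: linmap_sumf => r; apply: linmap_sumf => s a x y /=; rewrite phiH.
- by rewrite mulrDl -scalerAl (bilinDl bb) (bilinZl bb).
- by rewrite mulrDr -scalerAr (bilinDl bb) (bilinZl bb).
- by rewrite mulrDl -scalerAl (bilinDr bb) (bilinZr bb).
- by rewrite mulrDr -scalerAr (bilinDr bb) (bilinZr bb).
Qed.

Let coprod_phi_mul (p : H * H) :
  \sum_(q <- DeltaM (m * n)) b (phi p.1 q.1) (phi p.2 q.2) =
  \sum_(u <- Delta p.1) \sum_(v <- Delta p.2) G u.1 u.2 v.1 v.2.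
Proof.
have [_ [DMM _ _ _]] := hM.
rewrite (DMM m n _ _ (bilin_phiM p.1 p.2 bb)) big_allpairs_dep /G.
rewrite exchange_big22; apply: eq_bigr => r _; apply: eq_bigr => s _ /=.
rewrite !phi_mul (bilin_suml bb); apply: eq_bigr => u _.
by rewrite (bilin_sumr bb).
Qed.

Let DT_phi_mul (w : H * H) :
  \sum_(p <- DT (TMul (TVar w.1 m) (TVar w.2 n))) b p.1 p.2 =
  \sum_(x <- Delta w.1) \sum_(y <- Delta w.2) G x.1 y.1 x.2 y.2.
Proof.
rewrite /= /tprod !big_allpairs_dep; apply: eq_bigr => x _ /=.
under eq_bigr do rewrite big_allpairs_dep /=.
by rewrite exchange_big.
Qed.

(* Both sides are [G] summed over the fourfold coproduct of [h], in orders
   that agree by [coalg_interchange]; this is where cocommutativity of [H]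
   is needed. *)
Lemma DT_Rmul_sum h : \sum_(p <- DT (TVar h (m * n))) b p.1 p.2 =
  \sum_(p <- DT (tsum [seq TMul (TVar p.1 m) (TVar p.2 n) | p <- Delta h]))
    b p.1 p.2.
Proof.
rewrite DT_TVar_sum (DT_tsum bb) big_map.
rewrite (eq_bigr _ (fun p _ => coprod_phi_mul p)).
rewrite [RHS](eq_bigr _ (fun w _ => DT_phi_mul w)).
exact: (coalg_interchange hco hcc G_quadlin h).
Qed.

End MulRelation.

Lemma DT_rel t u : hm_rel Delta eps t u -> teq2 (DT t) (DT u).
Proof.
case=> [a h h' m|a h m m'|h m n|h]; [exact: DT_RlinH|exact: DT_RlinM| |].
- by move=> W b bb; apply: DT_Rmul_sum.
- exact: DT_Rone.
Qed.

Lemma DT_eqv t u : hm_eqv Delta eps t u -> teq2 (DT t) (DT u).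
Proof.
elim=> {t u} /=.
- by [].
- by move=> t u _; apply: teq2_sym.
- by move=> t u v _ e1 _ e2; apply: teq2_trans e1 e2.
- by move=> t t' u u' _ e1 _ e2; apply: teq2_cat.
- by move=> a t t' _ e; apply: teq2_scale.
- by move=> t t' u u' _ e1 _ e2; apply: teq2_tprod.
- by move=> t u v W b bb; rewrite catA.
- by move=> t u W b bb; rewrite !big_cat /= addrC.
- by move=> t W b bb; rewrite big_cons scale0r /= (bilin0l bb) add0r.
- move=> t W b bb; rewrite big_cat /= big_map big_seq1 scale0r /= (bilin0l bb).
  by rewrite -big_split big1 // => p _; rewrite /= (bilinZl bb) scaleN1r addNr.
- move=> a c t W b bb; rewrite !big_map.
  by apply: eq_bigr => p _; rewrite /= scalerA.
- by move=> t W b bb; rewrite big_map; apply: eq_bigr => p _; rewrite scale1r.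
- by move=> a t u; rewrite map_cat.
- move=> a c t W b bb; rewrite big_cat /= !big_map -big_split.
  by apply: eq_bigr => p _; rewrite /= scalerDl (bilinDl bb).
- move=> t u v W b bb; rewrite /tprod !big_allpairs_dep.
  apply: eq_bigr => p _; rewrite big_allpairs_dep.
  by apply: eq_bigr => q _; apply: eq_bigr => r _; rewrite /= !mulrA.
- move=> t u W b bb; rewrite /tprod !big_allpairs_dep exchange_big.
  apply: eq_bigr => p _; apply: eq_bigr => q _.
  by rewrite /= !(mulrC p.1) !(mulrC p.2).
- move=> t W b bb; rewrite /tprod big_allpairs_dep big_seq1.
  by apply: eq_bigr => p _; rewrite /= scale1r !mul1r.
- by move=> t u v; rewrite /tprod allpairs_cat.
- move=> a t u W b bb; rewrite /tprod big_map !big_allpairs_dep big_map.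
  by apply: eq_bigr => p _; apply: eq_bigr => q _; rewrite /= scalerAl.
- by move=> a W b bb; rewrite !big_seq1 scale1r.
- exact: DT_rel.
Qed.

Definition DH (x : HM) : tens2 HM HM := DT (rep x).

Lemma DH_cls t : teq2 (DH (cls t)) (DT t).
Proof. exact/DT_eqv/eqv_rep_cls. Qed.

Lemma DH_linear : coprod_linear DH.
Proof.
move=> a; elim/quot_ind => t; elim/quot_ind => u.
rewrite clsZ clsD; apply: teq2_trans (DH_cls _) _ => /=.
by apply: teq2_cat; [apply: teq2_scale|]; apply/teq2_sym/DH_cls.
Qed.

Lemma DHZ a x : teq2 (DH (a *: x)) [seq (a *: p.1, p.2) | p <- DH x].
Proof.
elim/quot_ind: x => t; rewrite clsZ; apply: teq2_trans (DH_cls _) _.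
exact/teq2_scale/teq2_sym/DH_cls.
Qed.

Lemma DHM x y : teq2 (DH (x * y)) (tprod (DH x) (DH y)).
Proof.
elim/quot_ind: x => t; elim/quot_ind: y => u; rewrite clsM.
by apply: teq2_trans (DH_cls _) _; apply: teq2_tprod; apply/teq2_sym/DH_cls.
Qed.

Lemma DH1 : teq2 (DH 1) [:: (1, 1)].
Proof.
rewrite -cls1; apply: teq2_trans (DH_cls _) _ => W b bb.
by rewrite !big_seq1 scale1r.
Qed.

Let eps_rel t u : hm_rel Delta eps t u ->
  evalT idfun (fun h m => eps h * epsM m) t =
  evalT idfun (fun h m => eps h * epsM m) u.
Proof.
have [epsL _ _ _ _] := hco; have [[epsML _ _ _ _] [_ _ epsMM epsM1]] := hM.
case=> /= [a h h' m|a h m m'|h m n|h].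
- by rewrite epsL mulrDl mulrA.
- by rewrite epsML mulrDr mulrCA.
- rewrite evalT_tsum big_map /= epsMM -(counit_coprod hco h) mulr_suml.
  by apply: eq_bigr => p _; rewrite mulrACA.
- by rewrite epsM1 mulr1.
Qed.

Definition epsH (x : HM) : k := evalQ idfun (fun h m => eps h * epsM m) x.

Lemma epsH_cls t : epsH (cls t) = evalT idfun (fun h m => eps h * epsM m) t.
Proof. exact: evalQ_cls eps_rel t. Qed.

Lemma epsH_linear : linform epsH.
Proof. exact: evalQ_lin eps_rel. Qed.

Lemma epsHM x y : epsH (x * y) = epsH x * epsH y.
Proof. exact: (evalQM eps_rel x y). Qed.

Lemma epsH1 : epsH 1 = 1.
Proof. exact: (evalQ1 eps_rel). Qed.

Let bilin_epsH_scale : bilin (fun x y : HM => epsH x *: y).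
Proof.
split=> [v|u] a x y /=; first by rewrite epsH_linear scalerDl scalerA.
by rewrite scalerDr !scalerA mulrC.
Qed.

Lemma DT_counitl t : \sum_(p <- DT t) epsH p.1 *: p.2 = cls t.
Proof.
elim: t => /= [h m|a|t IHt u IHu|a t IHt|t IHt u IHu].
- rewrite big_allpairs_dep /=.
  under eq_bigr => p _ do under eq_bigr => q _ do rewrite epsH_cls -scalerA.
  under eq_bigr => p _ do rewrite -scaler_sumr (coalg_counitl hMco (phiM p.2)).
  exact: (coalg_counitl hco (phiH m)).
- by rewrite big_seq1 (linformZ epsH_linear) epsH1 mulr1 clsC.
- by rewrite big_cat /= IHt IHu clsD.
- rewrite big_map /=; under eq_bigr do rewrite (linformZ epsH_linear) -scalerA.
  by rewrite -scaler_sumr IHt clsZ.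
- rewrite /tprod big_allpairs_dep /=.
  under eq_bigr do under eq_bigr do rewrite epsHM -scalerA scalerAr scalerAl.
  by under eq_bigr do rewrite -mulr_sumr; rewrite -mulr_suml IHt IHu clsM.
Qed.

Lemma DH_counitl x : \sum_(p <- DH x) epsH p.1 *: p.2 = x.
Proof.
by elim/quot_ind: x => t; rewrite -[RHS]DT_counitl; apply: DH_cls bilin_epsH_scale.
Qed.

Lemma DT_cocomm t : teq2 [seq (p.2, p.1) | p <- DT t] (DT t).
Proof.
elim: t => /= [h m|a|t IHt u IHu|a t IHt|t IHt u IHu] W b bb.
- rewrite big_map !big_allpairs_dep /=.
  have bS := bilin_sum (DeltaM m) (fun q => bilin_phiH q.2 q.1 bb).
  have /= -> := coalg_cocomm hcc bS h; apply: eq_bigr => p _.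
  exact: (coalg_cocomm hMc (bilin_phiM p.1 p.2 bb)).
- by rewrite !big_seq1 /= (bilinZr bb) (bilinZl bb).
- by rewrite map_cat; apply: teq2_cat.
- rewrite -map_comp !big_map /=.
  under eq_bigr do rewrite (bilinZr bb); under [RHS]eq_bigr do rewrite (bilinZl bb).
  by rewrite -!scaler_sumr (teq2_swap_sum IHt bb).
- rewrite /tprod big_map !big_allpairs_dep /= exchange_big /=.
  have bq (q : HM * HM) : bilin (fun x y => b (x * q.2) (y * q.1)).
    by apply: bilin_comp => //; apply: linmap_mulr.
  under eq_bigr => q _ do rewrite (teq2_swap_sum IHt (bq q)).
  rewrite exchange_big; apply: eq_bigr => p _ /=.
  have bp : bilin (fun x y => b (p.1 * x) (p.2 * y)).
    by apply: bilin_comp => //; apply: linmap_mull.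
  exact: (teq2_swap_sum IHu bp).
Qed.

Lemma DH_cocomm : cocommutative DH.
Proof.
elim/quot_ind => t; apply: teq2_trans (teq2_swap (DH_cls t)) _.
exact/(teq2_trans (DT_cocomm t))/teq2_sym/DH_cls.
Qed.

Lemma DH_counitr x : \sum_(p <- DH x) epsH p.2 *: p.1 = x.
Proof.
by rewrite -[RHS]DH_counitl -(coalg_cocomm DH_cocomm bilin_epsH_scale).
Qed.

Lemma DT_TVar_coassoc (W : lmodType k) (T : HM -> HM -> HM -> W) h m :
  trilin T ->
  \sum_(p <- DT (TVar h m)) \sum_(q <- DH p.1) T q.1 q.2 p.2 =
  \sum_(p <- DT (TVar h m)) \sum_(q <- DH p.2) T p.1 q.1 q.2.
Proof.
move=> tT; rewrite /= !big_allpairs_dep /=.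
under eq_bigr => p _ do under eq_bigr => q _ do
  rewrite (DH_cls _ (bilin_trilin12 _ tT)) /= big_allpairs_dep.
under [RHS]eq_bigr => p _ do under eq_bigr => q _ do
  rewrite (DH_cls _ (bilin_trilin23 _ tT)) /= big_allpairs_dep.
under eq_bigr => p _ do rewrite exchange_big /=.
have tF (r p : H * H) :
    trilin (fun y1 y2 y3 => T (phi r.1 y1) (phi r.2 y2) (phi p.2 y3)).
  exact: trilin_comp.
under eq_bigr => p _ do under eq_bigr => r _ do rewrite (coalg_coassoc hMco (tF r p)).
pose K a1 a2 a3 := \sum_(q <- DeltaM m) \sum_(s <- DeltaM q.2)
   T (phi a1 q.1) (phi a2 s.1) (phi a3 s.2).
have tK : trilin K.
  by apply: trilin_sum => q; apply: trilin_sum => s; apply: trilin_comp.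
have /= -> := coalg_coassoc hco tK h.
by apply: eq_bigr => p _; rewrite exchange_big.
Qed.

Lemma DT_coassoc t (W : lmodType k) (T : HM -> HM -> HM -> W) : trilin T ->
  \sum_(p <- DT t) \sum_(q <- DH p.1) T q.1 q.2 p.2 =
  \sum_(p <- DT t) \sum_(q <- DH p.2) T p.1 q.1 q.2.
Proof.
elim: t W T => [h m|a|t IHt u IHu|a t IHt|t IHt u IHu] W T tT;
  have [t1 _] := tT; have bT12 := bilin_trilin12 _ tT;
  have bT23 := bilin_trilin23 _ tT; rewrite /=.
- exact: DT_TVar_coassoc.
- rewrite !big_seq1 /= (DHZ _ _ (bT12 _)) big_map /=.
  under eq_bigr do rewrite (linmapZ (t1 _ _)).
  rewrite -scaler_sumr (DH1 (bT12 _)) (DH1 (bT23 _)).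
  by rewrite !big_seq1 /= (linmapZ (t1 _ _)).
- by rewrite !big_cat /= IHt // IHu.
- rewrite !big_map /=.
  under eq_bigr do rewrite (DHZ _ _ (bT12 _)) big_map /=.
  under eq_bigr do under eq_bigr do rewrite (linmapZ (t1 _ _)).
  under [RHS]eq_bigr do under eq_bigr do rewrite (linmapZ (t1 _ _)).
  under eq_bigr do rewrite -scaler_sumr; under [RHS]eq_bigr do rewrite -scaler_sumr.
  by rewrite -!scaler_sumr IHt.
- rewrite /tprod !big_allpairs_dep /=.
  under eq_bigr => p _ do under eq_bigr => p' _ do
    rewrite (DHM _ _ (bT12 _)) /tprod big_allpairs_dep.
  under [RHS]eq_bigr => p _ do under eq_bigr => p' _ do
    rewrite (DHM _ _ (bT23 _)) /tprod big_allpairs_dep.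
  under eq_bigr => p _ do rewrite exchange_big /=.
  under [RHS]eq_bigr => p _ do rewrite exchange_big /=.
  pose S a b c := \sum_(p' <- DT u) \sum_(q' <- DH p'.1)
    T (a * q'.1) (b * q'.2) (c * p'.2).
  have tS : trilin S.
    apply: trilin_sum => p'; apply: trilin_sum => q'.
    by apply: trilin_comp => //; apply: linmap_mulr.
  rewrite (IHt _ S tS); apply: eq_bigr => p _; apply: eq_bigr => q _.
  have tT' : trilin (fun a b c => T (p.1 * a) (q.1 * b) (q.2 * c)).
    by apply: trilin_comp => //; apply: linmap_mull.
  exact: (IHu _ _ tT').
Qed.

Lemma DH_coassoc x : teq3
  (flatten [seq [seq (q.1, q.2, p.2) | q <- DH p.1] | p <- DH x])
  (flatten [seq [seq (p.1, q.1, q.2) | q <- DH p.2] | p <- DH x]).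
Proof.
move=> W T tT; rewrite !big_flatten /= !big_map.
under eq_bigr do rewrite big_map; under [RHS]eq_bigr do rewrite big_map.
have [t1 [_ t3]] := tT.
have bl : bilin (fun x y => \sum_(q <- DH x) T q.1 q.2 y).
  split=> [v|u]; last exact: linmap_sumf.
  exact: (coprod_sum_linmap DH_linear (bilin_trilin12 v tT)).
have br : bilin (fun x y => \sum_(q <- DH y) T x q.1 q.2).
  split=> [v|u]; first exact: linmap_sumf.
  exact: (coprod_sum_linmap DH_linear (bilin_trilin23 u tT)).
elim/quot_ind: x => t /=.
by rewrite (DH_cls _ bl) (DH_cls _ br); apply: DT_coassoc.
Qed.

Lemma DH_bialgebra : is_bialgebra_on DH epsH.
Proof.
split; split; [exact: epsH_linear|exact: DH_linear|exact: DH_coassoc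
  |exact: DH_counitl|exact: DH_counitr|exact: DHM|exact: DH1|exact: epsHM|exact: epsH1].
Qed.

Section Antipode.
Variable SM : M -> M.
Hypothesis hS : is_antipode DeltaM epsM SM.

Let phiS_HM_map : HM_map Delta eps (fun h m => phi h (SM m)).
Proof.
have [SL _ _] := hS.
split; first by split=> [m|h]; [exact: phiH|exact: linmap_comp].
- by move=> h m n; rewrite (antipodeM hM hS) phi_mul.
- by move=> h; rewrite (antipode1 hM hS) phi1.
Qed.

Definition SH : HM -> HM := univ (fun h m => phi h (SM m)).

Let SH_alg_hom : alg_hom SH. Proof. exact: univ_alg_hom phiS_HM_map. Qed.

Let SH_phi h m : SH (phi h m) = phi h (SM m).
Proof. exact: univ_phi phiS_HM_map h m. Qed.

Lemma DT_antipodel t : \sum_(p <- DT t) SH p.1 * p.2 =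
  evalT idfun (fun h m => eps h * epsM m) t *: 1.
Proof.
have [SL SM_mul SH1] := SH_alg_hom; have [_ ASM _] := hS.
elim: t => /= [h m|a|t IHt u IHu|a t IHt|t IHt u IHu].
- rewrite big_allpairs_dep /= exchange_big /=.
  under eq_bigr => q _ do under eq_bigr => p _ do rewrite SH_phi.
  under eq_bigr => q _ do rewrite -phi_mul.
  rewrite -(linmap_sum (phiM h)) ASM (linmapZ (phiM h)) phi1 scalerA.
  by rewrite mulrC.
- by rewrite big_seq1 mulr1 (linmapZ SL) SH1.
- by rewrite big_cat /= IHt IHu scalerDl.
- rewrite big_map /=; under eq_bigr do rewrite (linmapZ SL) -scalerAl.
  by rewrite -scaler_sumr IHt scalerA.
- rewrite /tprod big_allpairs_dep /=.
  transitivity ((\sum_(p <- DT t) SH p.1 * p.2) * (\sum_(q <- DT u) SH q.1 * q.2)).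
    rewrite mulr_suml; apply: eq_bigr => p _; rewrite mulr_sumr.
    by apply: eq_bigr => q _; rewrite SM_mul; ring.
  by rewrite IHt IHu -scalerAl mul1r scalerA.
Qed.

Lemma SH_antipode : is_antipode DH epsH SH.
Proof.
have [SL _ _] := SH_alg_hom.
have bb : bilin (fun x y : HM => SH x * y) by apply: bilin_mul.
have AL x : \sum_(p <- DH x) SH p.1 * p.2 = epsH x *: 1.
  by elim/quot_ind: x => t; rewrite (DH_cls _ bb) DT_antipodel epsH_cls.
split=> // x; rewrite -AL -(coalg_cocomm DH_cocomm bb).
by apply: eq_bigr => p _; rewrite mulrC.
Qed.

End Antipode.

End Bialgebra.

Theorem mainTheorem2 (k : comPzRingType) (M : comAlgType k) (H : lmodType k)
    (Delta : H -> tens2 H H) (eps : H -> k) :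
  is_coalgebra Delta eps -> cocommutative Delta ->
  exists (HM : comAlgType k) (phi : H -> M -> HM),
    [/\ HM_map Delta eps phi,
        (* universal property *)
        (forall (B : comAlgType k) (psi : H -> M -> B),
           HM_map Delta eps psi ->
           exists f : HM -> B,
             [/\ alg_hom f,
                 (forall h m, f (phi h m) = psi h m) &
                 (forall g : HM -> B, alg_hom g ->
                    (forall h m, g (phi h m) = psi h m) -> g =1 f)]),
        (* if H is a bialgebra, H acts on H(M) *)
        (forall (mul : H -> H -> H) (one : H),
           is_bialgebra mul one Delta eps ->
           exists act : H -> HM -> HM,
             module_algebra_action mul one Delta eps act /\
             (forall (h1 h2 : H) (m : M),
                act h1 (phi h2 m) = phi (mul h1 h2) m)) &
        (* if M is a cocommutative bialgebra (resp. Hopf algebra), so is H(M) *)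
        (forall (DeltaM : M -> tens2 M M) (epsM : M -> k),
           is_bialgebra_on DeltaM epsM -> cocommutative DeltaM ->
           exists (DeltaHM : HM -> tens2 HM HM) (epsHM : HM -> k),
             [/\ is_bialgebra_on DeltaHM epsHM, cocommutative DeltaHM &
                 (forall SM : M -> M, is_antipode DeltaM epsM SM ->
                    exists SHM : HM -> HM, is_antipode DeltaHM epsHM SHM)])].
Proof.
move=> hco hcc; exists (HM M hco), (phi hco); split.
- exact: phi_HM_map.
- move=> B psi hpsi; exists (univ psi); split.
  + exact: univ_alg_hom.
  + exact: univ_phi.
  + by move=> g; apply: univ_unique.
- move=> mul one hbi; exists (act (hco := hco) mul).
  by split; [exact: act_module_algebra hco hcc hbi|exact: act_phi hco hcc hbi].
- move=> DeltaM epsM hM hMc.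
  exists (DH (hco := hco) DeltaM), (epsH (hco := hco) epsM); split.
  + exact: DH_bialgebra hco hcc hM hMc.
  + exact: DH_cocomm hco hcc hM hMc.
  + move=> SM hS; exists (SH (hco := hco) SM).
    exact: (SH_antipode hco hcc hM hMc hS).
Qed.
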